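(* Let $U\subset\mathbb C$ be a convex domain bounded by a smooth Jordan curve, and let $f$ be holomorphic in a neighborhood of $\overline U$ with $\operatorname{Re}(f')>0$ in $U$ and $f(z)\ne z$ for all $z\in\partial U$. Let $V^*=\{z\in U\cap f^{-1}(U): f(z)\ne z\}$ and $U^*=\{z\in U: f(z)\neq z\}$. If $z\in V^*$, then the segment $[z,f(z)]$ is contained in $U^*$.
   Context: $[z,w]$ denotes the Euclidean segment between $z$ and $w$. *)

From Stdlib Require Import Reals.
From Coquelicot Require Export Coquelicot.
Open Scope R_scope.

Definition segment (z w : C) : C -> Prop :=
  fun p => exists t : R, 0 <= t <= 1 /\ p = Cplus z (Cmult (RtoC t) (Cminus w z)).

Definition convex_set (U : C -> Prop) : Prop :=
  forall z w, U z -> U w -> forall p, segment z w p -> U p.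

Definition connected_set (U : C -> Prop) : Prop :=
  ~ exists A B : C -> Prop, open A /\ open B /\
      (forall z, U z -> A z \/ B z) /\
      (forall z, U z -> A z -> B z -> False) /\
      (exists z, U z /\ A z) /\ (exists z, U z /\ B z).

Definition open_domain (U : C -> Prop) : Prop :=
  (exists z, U z) /\ open U /\ connected_set U.

Definition closure_set (U : C -> Prop) : C -> Prop :=
  fun z => forall eps : posreal, exists w, ball z eps w /\ U w.

Definition boundary_set (U : C -> Prop) : C -> Prop :=
  fun z => closure_set U z /\
           forall eps : posreal, exists w, ball z eps w /\ ~ U w.

Definition smooth_jordan_curve (g : R -> C) : Prop :=
  (exists D : nat -> R -> C,
      D O = g /\
      (forall n t, @is_derive R_AbsRing C_R_NormedModule (D n) t (D (S n) t)) /\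
      (forall t, D 1%nat t <> RtoC 0)) /\
  (forall t, g (t + 1) = g t) /\
  (forall s t, 0 <= s < 1 -> 0 <= t < 1 -> g s = g t -> s = t).

Definition bounded_by_smooth_jordan_curve (U : C -> Prop) : Prop :=
  exists g : R -> C, smooth_jordan_curve g /\
    forall z, boundary_set U z <-> exists t, z = g t.

Definition holomorphic_near_closure (f : C -> C) (U : C -> Prop) : Prop :=
  exists W : C -> Prop, open W /\ (forall z, closure_set U z -> W z) /\
    forall z, W z -> @ex_derive C_AbsRing C_NormedModule f z.

(* If [f w = w] for some [w] on [[z, f z]], then [f z - w] and [z - w] point in
   opposite directions, so [Re ((f z - f w) * conj (z - w)) <= 0].  But
   [Re f' > 0] along [[w, z]] (which lies in the convex set [U]) forces this
   quantity to be positive: by the mean value theorem applied to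
   [s |-> Re (f (w + s (z - w)) * conj (z - w))], whose derivative is
   [Re f' * |z - w|^2]. *)
From Stdlib Require Import Reals Lra.
From Coquelicot Require Import Coquelicot.
Open Scope R_scope.

Lemma affine_line_minus (p d : C) (s s0 : R) :
  ((p + s * d) - (p + s0 * d))%C = (RtoC (s - s0) * d)%C.
Proof. destruct p, d. unfold Cminus, Cplus, Cmult, Copp, RtoC; simpl. f_equal; ring. Qed.

Lemma locally_affine_line (p d : C) (s0 : R) (Q : C -> Prop) :
  @locally (AbsRing_UniformSpace C_AbsRing) (p + s0 * d)%C Q ->
  locally s0 (fun s : R => Q (p + s * d)%C).
Proof.
  intros [eps Heps].
  pose proof (Cmod_ge_0 d) as Hd.
  assert (Hdelta : 0 < eps / (Cmod d + 1)).
  { apply Rdiv_lt_0_compat; [apply cond_pos | lra]. }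
  exists (mkposreal _ Hdelta). intros s Hs. apply Heps.
  change (Rabs (s - s0) < eps / (Cmod d + 1)) in Hs.
  apply Rlt_div_r in Hs; [|lra].
  change (Cmod ((p + s * d) - (p + s0 * d))%C < eps).
  rewrite affine_line_minus, Cmod_mult, Cmod_R.
  pose proof (Rabs_pos (s - s0)). nra.
Qed.

Lemma is_derive_Re_along_line (f : C -> C) (p d c l : C) (s0 : R) :
  is_derive f (p + s0 * d)%C l ->
  is_derive (fun s : R => Re (f (p + s * d) * c)%C) s0 (Re (l * d * c)%C).
Proof.
  intros [_ Hdom]. split; [apply is_linear_scal_l|].
  intros x Hx. apply (@is_filter_lim_locally_unique R_AbsRing R_NormedModule) in Hx.
  subst x. intros eps.
  pose proof (Cmod_ge_0 d) as Hd. pose proof (Cmod_ge_0 c) as Hc.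
  set (K := Cmod d * Cmod c + 1).
  assert (HK : 0 < K) by (unfold K; nra).
  assert (Heps' : 0 < eps / K) by (apply Rdiv_lt_0_compat; [apply cond_pos | exact HK]).
  specialize (Hdom _ (fun P H => H) (mkposreal _ Heps')).
  apply locally_affine_line in Hdom.
  eapply filter_imp; [|exact Hdom]. intros s Hs. simpl in Hs.
  set (x := (p + s * d)%C) in *. set (x0 := (p + s0 * d)%C) in *.
  set (E := ((f x - f x0) - (x - x0) * l)%C).
  change (Cmod E <= eps / K * Cmod (x - x0)%C) in Hs.
  change (Rabs (Re (f x * c)%C - Re (f x0 * c)%C - (s - s0) * Re (l * d * c)%C)
          <= eps * Rabs (s - s0)).
  replace (Re (f x * c)%C - Re (f x0 * c)%C - (s - s0) * Re (l * d * c)%C)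
    with (Re (E * c)%C)
    by (unfold E, x, x0; rewrite affine_line_minus;
        destruct (f _), (f _), l, d, c; simpl; ring).
  unfold x, x0 in Hs. rewrite affine_line_minus, Cmod_mult, Cmod_R in Hs.
  eapply Rle_trans; [apply re_le_Cmod|]. rewrite Cmod_mult.
  assert (HKeps : eps / K * (Cmod d * Cmod c) <= eps).
  { replace (Cmod d * Cmod c) with (K - 1) by (unfold K; ring).
    replace (eps / K * (K - 1)) with (eps - eps / K) by (field; lra). lra. }
  pose proof (Rabs_pos (s - s0)). nra.
Qed.

Lemma Re_mul_self_conj (l d : C) : Re (l * d * Cconj d)%C = Re l * Cmod d ^ 2.
Proof.
  rewrite <- Cmult_assoc, <- Cmod2_conj.
  destruct l; simpl; ring.
Qed.

Lemma Re_derive_pos_strictly_monotone (f : C -> C) (p q : C) :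
  p <> q ->
  (forall x, segment p q x -> ex_derive f x /\ 0 < Re (C_derive f x)) ->
  0 < Re ((f q - f p) * Cconj (q - p))%C.
Proof.
  intros Hpq Hf.
  set (d := (q - p)%C).
  set (phi := fun s : R => Re (f (p + s * d) * Cconj d)%C).
  set (dphi := fun s : R => Re (C_derive f (p + s * d) * d * Cconj d)%C).
  assert (Hline : forall s, 0 <= s <= 1 -> segment p q (p + s * d)%C)
    by (intros s Hs; exists s; auto).
  assert (Hder : forall s, 0 <= s <= 1 -> is_derive phi s (dphi s)).
  { intros s Hs. apply is_derive_Re_along_line, C_derive_correct; [exact p|].
    apply Hf, Hline, Hs. }
  destruct (MVT_gen phi 0 1 dphi) as [c [Hc Hmvt]].
  { intros s Hs. rewrite Rmin_left, Rmax_right in Hs by lra. apply Hder. lra. }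
  { intros s Hs. rewrite Rmin_left, Rmax_right in Hs by lra.
    apply continuity_pt_filterlim, (ex_derive_continuous phi).
    exists (dphi s). apply Hder, Hs. }
  rewrite Rmin_left, Rmax_right in Hc by lra.
  assert (H0 : (p + 0 * d)%C = p) by (destruct p, d; apply injective_projections; simpl; ring).
  assert (H1 : (p + 1 * d)%C = q)
    by (unfold d; destruct p, q; apply injective_projections; simpl; ring).
  unfold phi, dphi in Hmvt. rewrite H0, H1, Re_mul_self_conj in Hmvt.
  assert (Hd : 0 < Cmod d).
  { apply Cmod_gt_0. unfold d. destruct p, q. unfold Cminus, Cplus, Copp; simpl.
    intro H. injection H. intros. apply Hpq. f_equal; lra. }
  assert (Hfc : 0 < Re (C_derive f (p + c * d)%C)) by apply Hf, Hline, Hc.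
  replace (Re ((f q - f p) * Cconj d)%C) with (Re (f q * Cconj d)%C - Re (f p * Cconj d)%C)
    by (destruct (f q), (f p), d; simpl; ring).
  rewrite Hmvt. apply Rmult_lt_0_compat; [apply Rmult_lt_0_compat|]; try apply pow_lt; lra.
Qed.

Lemma segment_Re_opposite_le0 (z a w : C) :
  segment z a w -> Re ((a - w) * Cconj (z - w))%C <= 0.
Proof.
  intros [t [Ht ->]]. destruct z as [z1 z2], a as [a1 a2]. simpl.
  match goal with |- ?e <= 0 =>
    replace e with (- (t * (1 - t) * ((a1 - z1) ^ 2 + (a2 - z2) ^ 2))) by ring end.
  apply Ropp_le_cancel; rewrite Ropp_involutive, Ropp_0; apply Rmult_le_pos; [nra|].
  pose proof (pow2_ge_0 (a1 - z1)); pose proof (pow2_ge_0 (a2 - z2)); lra.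
Qed.

Theorem lemma3p3 (U : C -> Prop) (f : C -> C) :
  open_domain U ->
  convex_set U ->
  bounded_by_smooth_jordan_curve U ->
  holomorphic_near_closure f U ->
  (forall z, U z -> 0 < Re (C_derive f z)) ->
  (forall z, boundary_set U z -> f z <> z) ->
  forall z, (U z /\ U (f z) /\ f z <> z) ->
    forall w, segment z (f z) w -> (U w /\ f w <> w).
Proof.
  intros _ Hconv _ [W [_ [HclW Hhol]]] Hre _ z [Hz [Hfz Hne]] w Hseg.
  assert (Hw : U w) by exact (Hconv z (f z) Hz Hfz w Hseg).
  split; [exact Hw|]. intros Hfix.
  assert (Hwz : w <> z) by (intros ->; exact (Hne Hfix)).
  assert (Hmono : 0 < Re ((f z - f w) * Cconj (z - w))%C).
  { apply Re_derive_pos_strictly_monotone; [exact Hwz|].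
    intros x Hx. assert (Ux : U x) by exact (Hconv w z Hw Hz x Hx).
    split; [|exact (Hre x Ux)].
    apply Hhol, HclW. intros eps. exists x. split; [apply ball_center | exact Ux]. }
  rewrite Hfix in Hmono.
  pose proof (segment_Re_opposite_le0 z (f z) w Hseg). lra.
Qed.
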